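(* Under the sphere assumption, $\rho_d^*=\rho_d\in\mathbb R\cup\{+\infty\}$ for every $d\ge d^{min}$.
   Context: Complex setting: $n,m\in\mathbb N^*$; $z^\alpha=z_1^{\alpha_1}\cdots z_n^{\alpha_n}$, $|\alpha|=\sum\alpha_i$. $\mathbb R_d[\bar z,z]$: $\varphi(z)=\sum_{|\alpha|,|\beta|\le d}\varphi_{\alpha,\beta}\bar z^\alpha z^\beta$ with $\overline{\varphi_{\alpha,\beta}}=\varphi_{\beta,\alpha}$. $\Sigma_d[z]$: finite sums $\sum_j|p_j|^2$, $p_j$ holomorphic polynomials of degree $\le d$. Data $f\in\mathbb R_k[\bar z,z]$, $g_i\in\mathbb R_{k_i}[\bar z,z]$, $i=1,\dots,m$, with some nonzero coefficient having $|\alpha|=k$ (resp. $k_i$); $g_0:=1$, $k_0:=0$; $d^{min}=\max\{k,k_1,\dots,k_m\}$. $\mathcal H_d$: complex families $(y_{\alpha,\beta})_{|\alpha|,|\beta|\le d}$ with $\overline{y_{\alpha,\beta}}=y_{\beta,\alpha}$; $L_y(\varphi)=\sum\varphi_{\alpha,\beta}y_{\alpha,\beta}$; for $\varphi\in\mathbb R_l[\bar z,z]$, $M_e(\varphi y)$ is Hermitian, indexed by $|\alpha|,|\beta|\le e$, entries $\sum_{|\gamma|,|\delta|\le l}\varphi_{\gamma,\delta}y_{\alpha+\gamma,\beta+\delta}$. $\rho_d:=\inf\{L_y(f):y\in\mathcal H_d,\ y_{0,0}=1,\ M_{d-k_i}(g_iy)\succeq0,\ i=0,\dots,m\}$, $\rho_d^*:=\sup\{\lambda\in\mathbb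 R:f-\lambda=\sum_{i=0}^m\sigma_ig_i,\ \sigma_i\in\Sigma_{d-k_i}[z]\}$, with $\inf\emptyset=+\infty$, $\sup\emptyset=-\infty$. Sphere assumption: for some $R>0$ the constraints include $g_i=R^2-\sum_j|z_j|^2$ and $g_{i'}=-g_i$. *)

From Stdlib Require Import Reals List Arith.
Import ListNotations.
Open Scope R_scope.

Record C := mkC { re : R; im : R }.
Definition C0 : C := mkC 0 0.
Definition C1 : C := mkC 1 0.
Definition RtoC (r : R) : C := mkC r 0.
Definition Cadd (a b : C) : C := mkC (re a + re b) (im a + im b).
Definition Copp (a : C) : C := mkC (- re a) (- im a).
Definition Csub (a b : C) : C := Cadd a (Copp b).
Definition Cmul (a b : C) : C :=
  mkC (re a * re b - im a * im b) (re a * im b + im a * re b).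
Definition Cconj (a : C) : C := mkC (re a) (- im a).

Definition lsum {A : Type} (l : list A) (F : A -> C) : C :=
  fold_right (fun a acc => Cadd (F a) acc) C0 l.

(* a multi-index alpha in N^n is a list of naturals of length n *)
Definition mi := list nat.
Definition deg (a : mi) : nat := fold_right Nat.add 0%nat a.
Fixpoint madd (a b : mi) : mi :=
  match a, b with
  | x :: a', y :: b' => (x + y)%nat :: madd a' b'
  | _, _ => []
  end.
(* all multi-indices alpha in N^n with |alpha| <= d, each listed once *)
Fixpoint mis (n d : nat) : list mi :=
  match n with
  | O => [ [] ]
  | S n' => flat_map (fun a => map (cons a) (mis n' (d - a))) (seq 0 (S d))
  end.
Definition mi_eqb (a b : mi) : bool :=
  if list_eq_dec Nat.eq_dec a b then true else false.

(* phi alpha beta = coefficient phi_{alpha,beta} of zbar^alpha z^beta *)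
Definition cpoly := mi -> mi -> C.

(* phi in R_d[zbar,z] (n variables): Hermitian coefficients, supported on
   |alpha|,|beta| <= d.  The same shape describes H_d (moment families). *)
Definition in_Rd (n d : nat) (phi : cpoly) : Prop :=
  (forall a b, Cconj (phi a b) = phi b a) /\
  (forall a b, ~ (In a (mis n d) /\ In b (mis n d)) -> phi a b = C0).

Definition has_deg (n k : nat) (phi : cpoly) : Prop :=
  in_Rd n k phi /\
  exists a b, In a (mis n k) /\ In b (mis n k) /\ deg a = k /\ phi a b <> C0.

Definition one_poly (n : nat) : cpoly := fun a b =>
  if andb (mi_eqb a (repeat 0%nat n)) (mi_eqb b (repeat 0%nat n)) then C1 else C0.

(* R^2 - sum_j |z_j|^2 = R^2 - sum_j zbar_j z_j *)
Definition sphere_poly (n : nat) (Rr : R) : cpoly := fun a b =>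
  if mi_eqb a b then
    (if mi_eqb a (repeat 0%nat n) then RtoC (Rr * Rr)
     else if andb (Nat.eqb (length a) n) (Nat.eqb (deg a) 1) then RtoC (-1)
     else C0)
  else C0.

Definition popp (phi : cpoly) : cpoly := fun a b => Copp (phi a b).

Definition pmul (n : nat) (phi : cpoly) (da : nat) (psi : cpoly) (db : nat) : cpoly :=
  fun a b =>
    lsum (mis n da) (fun g => lsum (mis n da) (fun h =>
    lsum (mis n db) (fun e => lsum (mis n db) (fun t =>
      if andb (mi_eqb (madd g e) a) (mi_eqb (madd h t) b)
      then Cmul (phi g h) (psi e t) else C0)))).

(* holomorphic polynomials of degree <= e: p alpha = coefficient of z^alpha *)
Definition hpoly := mi -> C.
Definition hdeg_le (n e : nat) (p : hpoly) : Prop :=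
  forall a, ~ In a (mis n e) -> p a = C0.
(* sum_j |p_j|^2 : coefficient of zbar^alpha z^beta is sum_j conj(p_j alpha) p_j beta *)
Definition sos_of (ps : list hpoly) : cpoly := fun a b =>
  lsum ps (fun p => Cmul (Cconj (p a)) (p b)).

Definition Ly (n d : nat) (phi y : cpoly) : R :=
  re (lsum (mis n d) (fun a => lsum (mis n d) (fun b => Cmul (phi a b) (y a b)))).

Definition locmat (n e l : nat) (phi y : cpoly) : mi -> mi -> C := fun a b =>
  lsum (mis n l) (fun g => lsum (mis n l) (fun h =>
    Cmul (phi g h) (y (madd a g) (madd b h)))).

Definition psd (n e : nat) (M : mi -> mi -> C) : Prop :=
  (forall a b, In a (mis n e) -> In b (mis n e) -> Cconj (M a b) = M b a) /\
  (forall v : mi -> C,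
     0 <= re (lsum (mis n e) (fun a => lsum (mis n e) (fun b =>
              Cmul (Cconj (v a)) (Cmul (M a b) (v b)))))).

Inductive ER := Fin (r : R) | PInf | MInf.

Definition is_ext_inf (S : R -> Prop) (e : ER) : Prop :=
  match e with
  | PInf => forall x, ~ S x
  | MInf => forall M, exists x, S x /\ x < M
  | Fin r => (forall x, S x -> r <= x) /\
             (forall r', (forall x, S x -> r' <= x) -> r' <= r)
  end.

Definition is_ext_sup (S : R -> Prop) (e : ER) : Prop :=
  match e with
  | MInf => forall x, ~ S x
  | PInf => forall M, exists x, S x /\ M < x
  | Fin r => (forall x, S x -> x <= r) /\
             (forall r', (forall x, S x -> x <= r') -> r <= r')
  end.

(* g_0 := 1, k_0 := 0; g i, kg i for i = 1..m *)
Definition gfull (n : nat) (g : nat -> cpoly) (i : nat) : cpoly :=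
  match i with O => one_poly n | _ => g i end.
Definition kfull (kg : nat -> nat) (i : nat) : nat :=
  match i with O => 0%nat | _ => kg i end.

Definition dmin (m k : nat) (kg : nat -> nat) : nat :=
  fold_right Nat.max k (map kg (seq 1 m)).

(* values L_y(f) over feasible y; rho_d is its infimum *)
Definition moment_values (n m d : nat) (f : cpoly) (g : nat -> cpoly) (kg : nat -> nat)
  : R -> Prop := fun x =>
  exists y : cpoly, in_Rd n d y /\ y (repeat 0%nat n) (repeat 0%nat n) = C1 /\
    (forall i, (i <= m)%nat ->
       psd n (d - kfull kg i) (locmat n (d - kfull kg i) (kfull kg i) (gfull n g i) y)) /\
    x = Ly n d f y.

(* lambdas with f - lambda = sum_i sigma_i g_i, sigma_i in Sigma_{d - k_i}[z];
   rho_d^* is its supremum *)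
Definition sos_values (n m d : nat) (f : cpoly) (g : nat -> cpoly) (kg : nat -> nat)
  : R -> Prop := fun lam =>
  exists ps : nat -> list hpoly,
    (forall i, (i <= m)%nat -> forall p, In p (ps i) -> hdeg_le n (d - kfull kg i) p) /\
    (forall a b,
       Csub (f a b) (Cmul (RtoC lam) (one_poly n a b)) =
       lsum (seq 0 (S m)) (fun i =>
         pmul n (sos_of (ps i)) (d - kfull kg i) (gfull n g i) (kfull kg i) a b)).

(* Strong duality by separation in the finite-dimensional space R_d[zbar,z]. The sphere
   constraint makes the constant 1 an order unit of the truncated quadratic module Q_d: writing
   z^a = z^a' z_j, the identity |z^a'|^2 (R^2 - sum_j |z_j|^2) + sum_{i <> j} |z^a' z_i|^2
   = R^2 |z^a'|^2 - |z^a|^2 gives |z^a|^2 <= R^(2|a|) modulo Q_d, and |z^a - u z^b|^2 >= 0 bounds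
   the mixed terms. With an order unit, the M. Riesz extension theorem (carried out one real
   coordinate at a time against the gauge of 1) needs no closedness: if f - lambda is not in Q_d,
   there is a linear functional L >= 0 on Q_d with L(1) = 1 and L(f - lambda) <= 0. Its moment
   vector is feasible for the moment relaxation, so rho_d <= lambda. Hence every lambda < rho_d is
   attained by a certificate, which together with weak duality gives rho_d^* = rho_d; moreover
   rho_d > -oo since the order unit dominates -f. *)

From Stdlib Require Import Reals List Lia Lra Classical FunctionalExtensionality.
Import ListNotations.
Open Scope R_scope.

Lemma C_ext (a b : C) : re a = re b -> im a = im b -> a = b.
Proof. destruct a, b; simpl; intros; subst; reflexivity. Qed.

Ltac csplit := apply C_ext; cbn [re im Cadd Cmul Copp Csub Cconj RtoC C0 C1].

Lemma Cconj_mul a b : Cconj (Cmul a b) = Cmul (Cconj a) (Cconj b).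
Proof. csplit; ring. Qed.

Definition rsum {A : Type} (l : list A) (F : A -> R) : R :=
  fold_right (fun a acc => F a + acc) 0 l.

Section FiniteSums.
Context {A : Type}.
Implicit Types (l : list A) (F G : A -> C).

Lemma re_lsum l F : re (lsum l F) = rsum l (fun x => re (F x)).
Proof. induction l; simpl; [reflexivity|]. rewrite IHl; reflexivity. Qed.

Lemma lsum_ext l F G : (forall x, In x l -> F x = G x) -> lsum l F = lsum l G.
Proof. induction l; simpl; intros H; [reflexivity|]. rewrite H, IHl; auto. Qed.

Lemma rsum_ext l (F G : A -> R) : (forall x, In x l -> F x = G x) -> rsum l F = rsum l G.
Proof. induction l; simpl; intros H; [reflexivity|]. rewrite H, IHl; auto. Qed.

Lemma lsum_one (x : A) F : lsum [x] F = F x.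
Proof. unfold lsum; simpl. csplit; ring. Qed.

Lemma lsum_app l1 l2 F : lsum (l1 ++ l2) F = Cadd (lsum l1 F) (lsum l2 F).
Proof. induction l1; simpl. csplit; ring. rewrite IHl1. csplit; ring. Qed.

Lemma rsum_app l1 l2 (F : A -> R) : rsum (l1 ++ l2) F = rsum l1 F + rsum l2 F.
Proof. induction l1; simpl. ring. rewrite IHl1. ring. Qed.

Lemma lsum_add l F G : lsum l (fun x => Cadd (F x) (G x)) = Cadd (lsum l F) (lsum l G).
Proof. induction l; simpl. csplit; ring. rewrite IHl. csplit; ring. Qed.

Lemma rsum_add l (F G : A -> R) : rsum l (fun x => F x + G x) = rsum l F + rsum l G.
Proof. induction l; simpl. ring. rewrite IHl. ring. Qed.

Lemma lsum_mul_l l c F : lsum l (fun x => Cmul c (F x)) = Cmul c (lsum l F).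
Proof. induction l; simpl. csplit; ring. rewrite IHl. csplit; ring. Qed.

Lemma lsum_mul_r l c F : lsum l (fun x => Cmul (F x) c) = Cmul (lsum l F) c.
Proof. induction l; simpl. csplit; ring. rewrite IHl. csplit; ring. Qed.

Lemma rsum_mul_l l c (F : A -> R) : rsum l (fun x => c * F x) = c * rsum l F.
Proof. induction l; simpl. ring. rewrite IHl. ring. Qed.

Lemma lsum_zero l F : (forall x, In x l -> F x = C0) -> lsum l F = C0.
Proof. induction l; simpl; intros H; [reflexivity|]. rewrite H, IHl; auto. csplit; ring. Qed.

Lemma rsum_zero l (F : A -> R) : (forall x, In x l -> F x = 0) -> rsum l F = 0.
Proof. induction l; simpl; intros H; [reflexivity|]. rewrite H, IHl; auto. ring. Qed.

Lemma rsum_nonneg l (F : A -> R) : (forall x, In x l -> 0 <= F x) -> 0 <= rsum l F.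
Proof.
  induction l; simpl; intros H; [lra|].
  assert (0 <= F a) by auto. assert (0 <= rsum l F) by auto. lra.
Qed.

Lemma lsum_conj l F : Cconj (lsum l F) = lsum l (fun x => Cconj (F x)).
Proof. induction l; simpl. csplit; ring. rewrite <- IHl. csplit; ring. Qed.

Lemma lsum_single l F x : NoDup l -> In x l ->
  (forall y, In y l -> y <> x -> F y = C0) -> lsum l F = F x.
Proof.
  induction l as [|a l IH]; simpl; intros Hnd Hin H; [contradiction|].
  inversion Hnd; subst. destruct Hin as [<-|Hin].
  - rewrite lsum_zero. csplit; ring. intros y Hy. apply H; auto. intro; subst; contradiction.
  - rewrite (H a), IH; auto. csplit; ring. intro; subst; contradiction.
Qed.

Lemma rsum_single l (F : A -> R) x : NoDup l -> In x l ->
  (forall y, In y l -> y <> x -> F y = 0) -> rsum l F = F x.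
Proof.
  induction l as [|a l IH]; simpl; intros Hnd Hin H; [contradiction|].
  inversion Hnd; subst. destruct Hin as [<-|Hin].
  - rewrite rsum_zero. ring. intros y Hy. apply H; auto. intro; subst; contradiction.
  - rewrite (H a), IH; auto. ring. intro; subst; contradiction.
Qed.

Lemma lsum_two l F x y : NoDup l -> In x l -> In y l -> x <> y ->
  (forall z, In z l -> z <> x -> z <> y -> F z = C0) -> lsum l F = Cadd (F x) (F y).
Proof.
  induction l as [|a l IH]; simpl; intros Hnd Hx Hy Hxy H; [contradiction|].
  inversion Hnd; subst. destruct Hx as [<-|Hx]; destruct Hy as [<-|Hy].
  - contradiction.
  - f_equal. apply lsum_single; auto. intros z Hz Hzy. apply H; auto. intro; subst; contradiction.
  - rewrite (lsum_single l F x); auto. csplit; ring.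
    intros z Hz Hzx. apply H; auto. intro; subst; contradiction.
  - rewrite (H a), IH; auto. csplit; ring. all: intro; subst; contradiction.
Qed.

End FiniteSums.

Lemma lsum_swap {A B : Type} (l : list A) (l2 : list B) (F : A -> B -> C) :
  lsum l (fun a => lsum l2 (fun b => F a b)) = lsum l2 (fun b => lsum l (fun a => F a b)).
Proof.
  induction l; simpl. symmetry; apply lsum_zero; auto.
  rewrite IHl, <- lsum_add. reflexivity.
Qed.

Lemma lsum_flat_map {A B : Type} (f : B -> list A) (l : list B) (F : A -> C) :
  lsum (flat_map f l) F = lsum l (fun b => lsum (f b) F).
Proof. induction l; simpl; auto. rewrite lsum_app, IHl; auto. Qed.

Lemma rsum_flat_map {A B : Type} (f : B -> list A) (l : list B) (F : A -> R) :
  rsum (flat_map f l) F = rsum l (fun b => rsum (f b) F).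
Proof. induction l; simpl; auto. rewrite rsum_app, IHl; auto. Qed.

Lemma NoDup_flat_map {A B : Type} (f : A -> list B) l :
  NoDup l -> (forall x, In x l -> NoDup (f x)) ->
  (forall x y z, In x l -> In y l -> x <> y -> In z (f x) -> In z (f y) -> False) ->
  NoDup (flat_map f l).
Proof.
  induction l as [|a l IH]; intros Hnd Hf Hd; simpl; [constructor|].
  inversion Hnd; subst. apply NoDup_app.
  - apply Hf; simpl; auto.
  - apply IH; auto. intros x Hx; apply Hf; simpl; auto. intros x y z Hx Hy; apply Hd; simpl; auto.
  - intros z Hz Hz2. apply in_flat_map in Hz2 as [y [Hy Hzy]].
    apply (Hd a y z); simpl; auto. intro; subst; contradiction.
Qed.

(** * Multi-indices *)

Lemma mi_eqb_true (a b : mi) : mi_eqb a b = true <-> a = b.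
Proof. unfold mi_eqb. destruct (list_eq_dec Nat.eq_dec a b); split; congruence. Qed.

Lemma mi_eqb_refl (a : mi) : mi_eqb a a = true.
Proof. apply mi_eqb_true; auto. Qed.

Lemma mi_eqb_false (a b : mi) : a <> b -> mi_eqb a b = false.
Proof. intros H. destruct (mi_eqb a b) eqn:E; auto. apply mi_eqb_true in E; contradiction. Qed.

Lemma mi_eqb_sym a b : mi_eqb a b = mi_eqb b a.
Proof.
  destruct (mi_eqb a b) eqn:E; symmetry.
  - apply mi_eqb_true in E; subst; apply mi_eqb_refl.
  - apply mi_eqb_false. intros ->. rewrite mi_eqb_refl in E. discriminate.
Qed.

Lemma deg_cons x a : deg (x :: a) = (x + deg a)%nat.
Proof. reflexivity. Qed.

Lemma deg_repeat0 n : deg (repeat 0%nat n) = 0%nat.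
Proof. induction n; simpl; auto. Qed.

Lemma deg0_repeat a : deg a = 0%nat -> a = repeat 0%nat (length a).
Proof.
  induction a as [|x a IH]; [reflexivity|]. rewrite deg_cons. intros H. simpl.
  f_equal; [lia|]. apply IH; lia.
Qed.

Lemma mis_char n d a : In a (mis n d) <-> length a = n /\ (deg a <= d)%nat.
Proof.
  revert d a; induction n as [|n IH]; intros d a; cbn [mis].
  - split. intros [<-|[]]; simpl; split; auto; lia.
    intros [H1 H2]; destruct a; simpl in *; auto; lia.
  - rewrite in_flat_map. split.
    + intros [x [Hx Ha]]. apply in_seq in Hx. apply in_map_iff in Ha as [b [<- Hb]].
      apply IH in Hb as [Hb1 Hb2]. rewrite deg_cons. split; [simpl; lia|lia].
    + intros [H1 H2]. destruct a as [|x b]; [simpl in H1; lia|]. simpl in H1.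
      rewrite deg_cons in H2. exists x; split.
      * apply in_seq; lia.
      * apply in_map, IH; split; lia.
Qed.

Lemma NoDup_mis n d : NoDup (mis n d).
Proof.
  revert d; induction n as [|n IH]; intros d; cbn [mis].
  - repeat constructor; auto.
  - apply NoDup_flat_map. apply seq_NoDup.
    + intros x _. apply NoDup_map_NoDup_ForallPairs; auto. intros u v _ _ H; injection H; auto.
    + intros x y z _ _ Hxy H1 H2. apply in_map_iff in H1 as [u [<- _]].
      apply in_map_iff in H2 as [v [Hv _]]. injection Hv; intros; subst; auto.
Qed.

Lemma mis0 n : mis n 0 = [repeat 0%nat n].
Proof. induction n; simpl; auto. rewrite IHn; auto. Qed.

Lemma repeat0_mis n d : In (repeat 0%nat n) (mis n d).
Proof. apply mis_char. rewrite repeat_length, deg_repeat0. split; auto; lia. Qed.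

Lemma mis_mono n d d' a : (d <= d')%nat -> In a (mis n d) -> In a (mis n d').
Proof. rewrite !mis_char; intros ? [? ?]; split; auto; lia. Qed.

Lemma madd_length a b : length a = length b -> length (madd a b) = length a.
Proof.
  revert b; induction a as [|x a IH]; intros [|y b]; simpl; intros H; try lia.
  rewrite IH; lia.
Qed.

Lemma madd_deg a b : length a = length b -> deg (madd a b) = (deg a + deg b)%nat.
Proof.
  revert b; induction a as [|x a IH]; intros [|y b]; simpl; intros H; auto; try discriminate.
  unfold deg in *; simpl. rewrite IH; lia.
Qed.

Lemma madd_mis n p q a b : In a (mis n p) -> In b (mis n q) -> In (madd a b) (mis n (p + q)).
Proof.
  rewrite !mis_char. intros [H1 H2] [H3 H4]. split.
  - rewrite madd_length; lia.
  - rewrite madd_deg; lia.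
Qed.

Lemma madd_repeat0 a : madd a (repeat 0%nat (length a)) = a.
Proof. induction a; simpl; auto. rewrite IHa, Nat.add_0_r; auto. Qed.

Lemma madd_unit_split a : (1 <= deg a)%nat -> exists a' e,
  madd a' e = a /\ length a' = length a /\ length e = length a /\
  deg e = 1%nat /\ deg a' = (deg a - 1)%nat.
Proof.
  induction a as [|x a IH]; intros H; [simpl in H; lia|].
  rewrite deg_cons in H |- *. simpl length. destruct x as [|x].
  - destruct IH as [a' [e [H1 [H2 [H3 [H4 H5]]]]]]; [lia|].
    exists (0%nat :: a'), (0%nat :: e). rewrite !deg_cons. simpl.
    rewrite H1, H2, H3. repeat split; auto; lia.
  - exists (x :: a), (1%nat :: repeat 0%nat (length a)). rewrite !deg_cons, deg_repeat0. simpl.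
    rewrite madd_repeat0, repeat_length. repeat split; auto; try lia. f_equal; lia.
Qed.

Definition inb (a : mi) (M : list mi) : bool :=
  if in_dec (list_eq_dec Nat.eq_dec) a M then true else false.

Lemma inb_true a M : In a M -> inb a M = true.
Proof. unfold inb. destruct in_dec; auto; contradiction. Qed.

Lemma inb_false a M : ~ In a M -> inb a M = false.
Proof. unfold inb. destruct in_dec; auto; contradiction. Qed.

Lemma inb_In a M : inb a M = true -> In a M.
Proof. unfold inb. destruct in_dec; auto; discriminate. Qed.

Lemma lsum_diag (M : list mi) (F : mi -> mi -> C) p q : NoDup M ->
  lsum M (fun a => lsum M (fun b => if andb (mi_eqb p a) (mi_eqb q b) then F a b else C0)) =
  if andb (inb p M) (inb q M) then F p q else C0.
Proof.
  intros HM. destruct (in_dec (list_eq_dec Nat.eq_dec) p M) as [Hp|Hp].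
  - rewrite inb_true by auto. rewrite (lsum_single _ _ p); auto.
    + rewrite mi_eqb_refl. simpl. destruct (in_dec (list_eq_dec Nat.eq_dec) q M) as [Hq|Hq].
      * rewrite inb_true by auto. rewrite (lsum_single _ _ q); auto. rewrite mi_eqb_refl; auto.
        intros y _ Hy. rewrite mi_eqb_false; auto.
      * rewrite inb_false by auto. apply lsum_zero. intros y Hy.
        rewrite mi_eqb_false; auto. intro; subst; auto.
    + intros y _ Hy. apply lsum_zero; intros. rewrite mi_eqb_false; auto.
  - rewrite inb_false by auto. simpl. apply lsum_zero; intros y Hy. apply lsum_zero; intros.
    rewrite mi_eqb_false; auto. intro; subst; auto.
Qed.

Definition padd (x y : cpoly) : cpoly := fun a b => Cadd (x a b) (y a b).
Definition pscal (r : R) (x : cpoly) : cpoly := fun a b => Cmul (RtoC r) (x a b).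
Definition pzero : cpoly := fun _ _ => C0.
Definition herm (phi : cpoly) : Prop := forall a b, Cconj (phi a b) = phi b a.
Definition supported (n d : nat) (phi : cpoly) : Prop :=
  forall a b, ~ (In a (mis n d) /\ In b (mis n d)) -> phi a b = C0.

Lemma in_Rd_ext n d x y : (forall a b, x a b = y a b) -> in_Rd n d x -> in_Rd n d y.
Proof.
  intros H. replace y with x; auto. do 2 (apply functional_extensionality; intro). auto.
Qed.

Lemma in_Rd_padd n d x y : in_Rd n d x -> in_Rd n d y -> in_Rd n d (padd x y).
Proof.
  intros [H1 H2] [H3 H4]. split; intros a b; unfold padd.
  - rewrite <- H1, <- H3. csplit; ring.
  - intros H. rewrite H2, H4; auto. csplit; ring.
Qed.

Lemma in_Rd_pscal n d s x : in_Rd n d x -> in_Rd n d (pscal s x).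
Proof.
  intros [H1 H2]. split; intros a b; unfold pscal.
  - rewrite <- H1. csplit; ring.
  - intros H. rewrite H2; auto. csplit; ring.
Qed.

Lemma in_Rd_lsum {A : Type} n d (l : list A) (F : A -> cpoly) :
  (forall i, In i l -> in_Rd n d (F i)) -> in_Rd n d (fun a b => lsum l (fun i => F i a b)).
Proof.
  induction l as [|i l IH]; intros H.
  - split; intros; simpl; auto. csplit; ring.
  - apply (in_Rd_padd n d (F i) (fun a b => lsum l (fun i => F i a b))).
    + apply H; simpl; auto.
    + apply IH; intros; apply H; simpl; auto.
Qed.

Lemma one_in_Rd n d : in_Rd n d (one_poly n).
Proof.
  split.
  - intros a b. unfold one_poly. rewrite Bool.andb_comm. destruct (andb _ _); csplit; ring.
  - intros a b H. unfold one_poly.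
    destruct (mi_eqb a (repeat 0%nat n)) eqn:E1, (mi_eqb b (repeat 0%nat n)) eqn:E2; simpl; auto.
    apply mi_eqb_true in E1, E2. subst. exfalso; apply H; split; apply repeat0_mis.
Qed.

Definition hmono (c : mi) : hpoly := fun x => if mi_eqb x c then C1 else C0.
Definition hscale (r : R) (p : hpoly) : hpoly := fun a => Cmul (RtoC r) (p a).

Lemma sos_hmono c x y :
  sos_of [hmono c] x y = if andb (mi_eqb x c) (mi_eqb y c) then C1 else C0.
Proof.
  unfold sos_of, hmono. rewrite lsum_one.
  destruct (mi_eqb x c), (mi_eqb y c); simpl; csplit; ring.
Qed.

Lemma sos_of_app l1 l2 a b : sos_of (l1 ++ l2) a b = Cadd (sos_of l1 a b) (sos_of l2 a b).
Proof. apply lsum_app. Qed.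

Lemma sos_of_hscale s l a b : 0 <= s ->
  sos_of (map (hscale (sqrt s)) l) a b = Cmul (RtoC s) (sos_of l a b).
Proof.
  intros Hs. unfold sos_of. induction l as [|p l IH]; simpl. csplit; ring.
  rewrite IH. unfold hscale. pose proof (sqrt_sqrt s Hs) as E. set (r := sqrt s) in *.
  rewrite <- E. csplit; ring.
Qed.

Lemma sos_of_herm l : herm (sos_of l).
Proof. intros a b. unfold sos_of. rewrite lsum_conj. apply lsum_ext; intros. csplit; ring. Qed.

Lemma sos_of_supported n d l : (forall p, In p l -> hdeg_le n d p) -> supported n d (sos_of l).
Proof.
  intros H a b Hn. apply lsum_zero. intros p Hp.
  destruct (classic (In a (mis n d))) as [Ha|Ha].
  - rewrite (H p Hp b) by tauto. csplit; ring.
  - rewrite (H p Hp a) by auto. csplit; ring.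
Qed.

Section Product.
Variable n : nat.

Lemma pmul_add_l phi psi da ga db a b :
  pmul n (fun a b => Cadd (phi a b) (psi a b)) da ga db a b =
  Cadd (pmul n phi da ga db a b) (pmul n psi da ga db a b).
Proof.
  unfold pmul. do 4 (rewrite <- lsum_add; apply lsum_ext; intros).
  destruct (andb _ _); csplit; ring.
Qed.

Lemma pmul_scal_l c phi da ga db a b :
  pmul n (fun a b => Cmul c (phi a b)) da ga db a b = Cmul c (pmul n phi da ga db a b).
Proof.
  unfold pmul. do 4 (rewrite <- lsum_mul_l; apply lsum_ext; intros).
  destruct (andb _ _); csplit; ring.
Qed.

Lemma pmul_zero_l phi da ga db a b :
  (forall a b, phi a b = C0) -> pmul n phi da ga db a b = C0.
Proof.
  intros H. unfold pmul. repeat (apply lsum_zero; intros).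
  destruct (andb _ _); auto. rewrite H; csplit; ring.
Qed.

Lemma pmul_sos_of l da psi db a b :
  pmul n (sos_of l) da psi db a b = lsum l (fun p => pmul n (sos_of [p]) da psi db a b).
Proof.
  induction l as [|p l IH].
  - apply pmul_zero_l; auto.
  - replace (sos_of (p :: l)) with (fun a b => Cadd (sos_of [p] a b) (sos_of l a b)).
    + rewrite pmul_add_l, IH. reflexivity.
    + do 2 (apply functional_extensionality; intro). symmetry. apply (sos_of_app [p] l).
Qed.

Lemma pmul_one_r d phi a b : supported n d phi -> pmul n phi d (one_poly n) 0 a b = phi a b.
Proof.
  intros Hs. unfold pmul. rewrite mis0.
  transitivity (lsum (mis n d) (fun G => lsum (mis n d) (fun H =>
     if andb (mi_eqb a G) (mi_eqb b H) then phi G H else C0))).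
  - apply lsum_ext; intros G HG. apply lsum_ext; intros H HH. rewrite !lsum_one.
    apply mis_char in HG as [HG _]. apply mis_char in HH as [HH _].
    rewrite <- HG, madd_repeat0, HG, <- HH, madd_repeat0, HH.
    unfold one_poly. rewrite !mi_eqb_refl, (mi_eqb_sym a), (mi_eqb_sym b). simpl.
    destruct (andb _ _); auto. csplit; ring.
  - rewrite lsum_diag by apply NoDup_mis.
    destruct (inb a (mis n d)) eqn:Ea, (inb b (mis n d)) eqn:Eb; simpl; auto;
      symmetry; apply Hs; intros [Ha Hb]; rewrite inb_true in *; auto; discriminate.
Qed.

Lemma pmul_herm phi da psi db : herm phi -> herm psi -> herm (pmul n phi da psi db).
Proof.
  intros H1 H2 a b. unfold pmul. rewrite lsum_swap.
  rewrite lsum_conj. apply lsum_ext; intros G _. rewrite lsum_conj. apply lsum_ext; intros H _.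
  rewrite lsum_conj, lsum_swap. apply lsum_ext; intros e _. rewrite lsum_conj.
  apply lsum_ext; intros t _.
  rewrite Bool.andb_comm. destruct (andb _ _).
  - rewrite Cconj_mul, H1, H2; auto.
  - csplit; ring.
Qed.

Lemma pmul_supported d k phi psi : (k <= d)%nat -> supported n d (pmul n phi (d - k) psi k).
Proof.
  intros Hk a b Hn. unfold pmul. repeat (apply lsum_zero; intros).
  destruct (mi_eqb _ a) eqn:E1, (mi_eqb _ b) eqn:E2; simpl; auto.
  apply mi_eqb_true in E1, E2. exfalso. apply Hn. subst. split.
  all: replace d with (d - k + k)%nat by lia; apply madd_mis; auto.
Qed.

Lemma pmul_hmono_l da phi db c x y : In c (mis n da) ->
  pmul n (sos_of [hmono c]) da phi db x y =
  lsum (mis n db) (fun e => lsum (mis n db) (fun t =>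
     if andb (mi_eqb (madd c e) x) (mi_eqb (madd c t) y) then phi e t else C0)).
Proof.
  intros Hc. unfold pmul. rewrite (lsum_single _ _ c); [|apply NoDup_mis|auto|].
  - rewrite (lsum_single _ _ c); [|apply NoDup_mis|auto|].
    + apply lsum_ext; intros e _; apply lsum_ext; intros t _.
      rewrite sos_hmono, !mi_eqb_refl. simpl. destruct (andb _ _); auto. csplit; ring.
    + intros H _ HH. repeat (apply lsum_zero; intros). rewrite sos_hmono, (mi_eqb_false _ _ HH).
      rewrite Bool.andb_false_r. destruct (andb _ _); auto. csplit; ring.
  - intros G _ HG. repeat (apply lsum_zero; intros). rewrite sos_hmono, (mi_eqb_false _ _ HG).
    simpl. destruct (andb _ _); auto. csplit; ring.
Qed.

End Product.

Lemma Ly_ext n d x x' y : (forall a b, x a b = x' a b) -> Ly n d x y = Ly n d x' y.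
Proof. intros H. unfold Ly. f_equal. do 2 (apply lsum_ext; intros). rewrite H; auto. Qed.

Lemma Ly_lsum {A : Type} n d (l : list A) (F : A -> cpoly) y :
  Ly n d (fun a b => lsum l (fun i => F i a b)) y = rsum l (fun i => Ly n d (F i) y).
Proof.
  unfold Ly. rewrite <- re_lsum. f_equal.
  transitivity (lsum (mis n d) (fun a => lsum (mis n d) (fun b =>
                  lsum l (fun i => Cmul (F i a b) (y a b))))).
  { do 2 (apply lsum_ext; intros). rewrite lsum_mul_r. auto. }
  transitivity (lsum (mis n d) (fun a => lsum l (fun i =>
                  lsum (mis n d) (fun b => Cmul (F i a b) (y a b))))).
  { apply lsum_ext; intros. apply lsum_swap. }
  apply lsum_swap.
Qed.

Lemma Ly_lin n d x x' s y :
  Ly n d (fun a b => Cadd (x a b) (Cmul (RtoC s) (x' a b))) y = Ly n d x y + s * Ly n d x' y.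
Proof.
  unfold Ly. rewrite !re_lsum, <- rsum_mul_l, <- rsum_add. apply rsum_ext; intros a _.
  rewrite !re_lsum, <- rsum_mul_l, <- rsum_add. apply rsum_ext; intros b _. simpl. ring.
Qed.

Lemma Ly_pscal n d s x y : Ly n d (pscal s x) y = s * Ly n d x y.
Proof.
  unfold Ly, pscal. rewrite !re_lsum, <- rsum_mul_l. apply rsum_ext; intros a _.
  rewrite !re_lsum, <- rsum_mul_l. apply rsum_ext; intros b _. simpl. ring.
Qed.

Lemma Ly_one n d y : Ly n d (one_poly n) y = re (y (repeat 0%nat n) (repeat 0%nat n)).
Proof.
  unfold Ly, one_poly. set (z := repeat 0%nat n).
  rewrite (lsum_ext _ _ (fun a => lsum (mis n d) (fun b =>
     if andb (mi_eqb z a) (mi_eqb z b) then y a b else C0))).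
  - rewrite lsum_diag, !inb_true by (apply NoDup_mis || apply repeat0_mis). reflexivity.
  - intros a _. apply lsum_ext; intros b _. rewrite (mi_eqb_sym z), (mi_eqb_sym z).
    destruct (andb _ _); csplit; ring.
Qed.

Definition qform (n e : nat) (M : mi -> mi -> C) (v : mi -> C) : C :=
  lsum (mis n e) (fun a => lsum (mis n e) (fun b => Cmul (Cconj (v a)) (Cmul (M a b) (v b)))).

Lemma Ly_pmul_sos n d k phi y p : (k <= d)%nat ->
  Ly n d (pmul n (sos_of [p]) (d - k) phi k) y = re (qform n (d - k) (locmat n (d - k) k phi y) p).
Proof.
  intros Hk. unfold Ly, qform. f_equal.
  set (M := mis n d). set (N := mis n (d - k)). set (K := mis n k).
  set (T := fun a b G H e t => if andb (mi_eqb (madd G e) a) (mi_eqb (madd H t) b)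
                 then Cmul (Cmul (sos_of [p] G H) (phi e t)) (y a b) else C0).
  transitivity (lsum M (fun a => lsum M (fun b => lsum N (fun G => lsum N (fun H =>
                  lsum K (fun e => lsum K (fun t => T a b G H e t))))))).
  { do 2 (apply lsum_ext; intros). unfold pmul.
    do 4 (rewrite <- lsum_mul_r; apply lsum_ext; intros).
    unfold T. destruct (andb _ _); auto. csplit; ring. }
  transitivity (lsum M (fun a => lsum N (fun G => lsum N (fun H =>
                  lsum K (fun e => lsum K (fun t => lsum M (fun b => T a b G H e t))))))).
  { apply lsum_ext; intros a _. do 4 (rewrite lsum_swap; apply lsum_ext; intros). reflexivity. }
  transitivity (lsum N (fun G => lsum N (fun H =>
                  lsum K (fun e => lsum K (fun t => lsum M (fun a => lsum M (fun b => T a b G H e t))))))).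
  { do 4 (rewrite lsum_swap; apply lsum_ext; intros). reflexivity. }
  apply lsum_ext; intros G HG. apply lsum_ext; intros H HH. unfold locmat. fold K.
  rewrite <- lsum_mul_r, <- lsum_mul_l. apply lsum_ext; intros e He.
  rewrite <- lsum_mul_r, <- lsum_mul_l. apply lsum_ext; intros t Ht.
  assert (Hsum : forall a b, In a N -> In b K -> In (madd a b) M).
  { intros. unfold M. replace d with (d - k + k)%nat by lia. apply madd_mis; auto. }
  unfold T. rewrite lsum_diag, !inb_true by (apply NoDup_mis || auto). simpl.
  unfold sos_of, lsum. simpl. csplit; ring.
Qed.

Lemma locmat_herm n e k phi y : herm phi -> herm y ->
  forall a b, Cconj (locmat n e k phi y a b) = locmat n e k phi y b a.
Proof.
  intros H1 H2 a b. unfold locmat. rewrite lsum_conj, lsum_swap. apply lsum_ext; intros G _.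
  rewrite lsum_conj. apply lsum_ext; intros H _. rewrite Cconj_mul, H1, H2. auto.
Qed.

(** * The truncated quadratic module *)

Section QuadraticModule.
Variables (n m d : nat) (g : nat -> cpoly) (kg : nat -> nat).

Definition qmodule (x : cpoly) : Prop :=
  exists ps : nat -> list hpoly,
    (forall i, (i <= m)%nat -> forall p, In p (ps i) -> hdeg_le n (d - kfull kg i) p) /\
    (forall a b, x a b =
       lsum (seq 0 (S m)) (fun i =>
         pmul n (sos_of (ps i)) (d - kfull kg i) (gfull n g i) (kfull kg i) a b)).

Lemma qmodule_ext x y : (forall a b, x a b = y a b) -> qmodule x -> qmodule y.
Proof. intros H [ps [H1 H2]]. exists ps; split; auto. intros; rewrite <- H; auto. Qed.

Lemma qmodule_zero : qmodule pzero.
Proof.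
  exists (fun _ => []). split; [intros i _ p []|].
  intros a b. symmetry. apply lsum_zero; intros. apply pmul_zero_l; auto.
Qed.

Lemma qmodule_add x y : qmodule x -> qmodule y -> qmodule (padd x y).
Proof.
  intros [ps [H1 H2]] [qs [H3 H4]]. exists (fun i => ps i ++ qs i). split.
  - intros i Hi p Hp. apply in_app_or in Hp as [Hp|Hp]; eauto.
  - intros a b. unfold padd. rewrite (H2 a b), (H4 a b), <- lsum_add. apply lsum_ext; intros i _.
    rewrite <- pmul_add_l. f_equal. do 2 (apply functional_extensionality; intro).
    symmetry. apply sos_of_app.
Qed.

Lemma qmodule_scal s x : 0 <= s -> qmodule x -> qmodule (pscal s x).
Proof.
  intros Hs [ps [H1 H2]]. exists (fun i => map (hscale (sqrt s)) (ps i)). split.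
  - intros i Hi p Hp. apply in_map_iff in Hp as [q [<- Hq]]. intros a Ha. unfold hscale.
    rewrite (H1 i Hi q Hq a Ha). csplit; ring.
  - intros a b. unfold pscal. rewrite (H2 a b), <- lsum_mul_l. apply lsum_ext; intros i _.
    rewrite <- pmul_scal_l. f_equal. do 2 (apply functional_extensionality; intro).
    symmetry. apply sos_of_hscale; auto.
Qed.

Lemma qmodule_sum {A : Type} (l : list A) (F : A -> cpoly) :
  (forall x, In x l -> qmodule (F x)) -> qmodule (fun a b => lsum l (fun x => F x a b)).
Proof.
  induction l as [|x l IH]; intros H.
  - apply qmodule_zero.
  - apply (qmodule_add (F x) (fun a b => lsum l (fun x => F x a b))).
    + apply H; simpl; auto.
    + apply IH; intros; apply H; simpl; auto.
Qed.

Lemma qmodule_gen i p : (i <= m)%nat -> hdeg_le n (d - kfull kg i) p ->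
  qmodule (pmul n (sos_of [p]) (d - kfull kg i) (gfull n g i) (kfull kg i)).
Proof.
  intros Hi Hp. exists (fun j => if Nat.eqb j i then [p] else []). split.
  - intros j Hj q Hq. destruct (Nat.eqb_spec j i); [subst|destruct Hq].
    destruct Hq as [<-|[]]; auto.
  - intros a b. rewrite (lsum_single _ _ i).
    + rewrite Nat.eqb_refl; auto.
    + apply seq_NoDup.
    + apply in_seq; lia.
    + intros j _ Hj. apply Nat.eqb_neq in Hj. rewrite Hj. apply pmul_zero_l; auto.
Qed.

Lemma qmodule_sos l : (forall p, In p l -> hdeg_le n d p) -> qmodule (sos_of l).
Proof.
  intros H. apply (qmodule_ext (fun a b => lsum l (fun p => sos_of [p] a b))).
  { intros a b. apply lsum_ext; intros p _. exact (lsum_one p (fun q => Cmul (Cconj (q a)) (q b))). }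
  apply qmodule_sum. intros p Hp.
  apply (qmodule_ext (pmul n (sos_of [p]) (d - kfull kg 0) (gfull n g 0) (kfull kg 0))).
  - intros a b. cbn [kfull gfull]. rewrite Nat.sub_0_r. apply pmul_one_r.
    apply sos_of_supported. intros q [<-|[]]. auto.
  - apply qmodule_gen; [lia|]. cbn [kfull]. rewrite Nat.sub_0_r. auto.
Qed.

Lemma qmodule_one : qmodule (one_poly n).
Proof.
  apply (qmodule_ext (sos_of [hmono (repeat 0%nat n)])).
  - intros a b. rewrite sos_hmono. reflexivity.
  - apply qmodule_sos. intros p [<-|[]] a Ha. unfold hmono.
    rewrite mi_eqb_false; auto. intros ->. apply Ha, repeat0_mis.
Qed.

Definition wf_constraints : Prop :=
  forall i, (i <= m)%nat -> herm (gfull n g i) /\ (kfull kg i <= d)%nat.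

Hypothesis Hwf : wf_constraints.

Lemma qmodule_in_Rd x : qmodule x -> in_Rd n d x.
Proof.
  intros [ps [_ Hx]].
  assert (Hsum : in_Rd n d (fun a b => lsum (seq 0 (S m)) (fun i =>
      pmul n (sos_of (ps i)) (d - kfull kg i) (gfull n g i) (kfull kg i) a b))).
  { apply in_Rd_lsum. intros i Hi. apply in_seq in Hi. destruct (Hwf i) as [Hh Hk]; [lia|].
    split.
    - apply pmul_herm; auto. apply sos_of_herm.
    - apply pmul_supported; auto. }
  destruct Hsum as [Ha Hb]. split; intros a b; rewrite !Hx; auto.
Qed.

Lemma qmodule_Ly_nonneg y x :
  (forall i, (i <= m)%nat ->
     psd n (d - kfull kg i) (locmat n (d - kfull kg i) (kfull kg i) (gfull n g i) y)) ->
  qmodule x -> 0 <= Ly n d x y.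
Proof.
  intros Hpsd [ps [H1 H2]]. rewrite (Ly_ext _ _ _ _ _ H2), Ly_lsum.
  apply rsum_nonneg. intros i Hi. apply in_seq in Hi.
  rewrite (Ly_ext _ _ _ _ _ (pmul_sos_of n (ps i) _ _ _)), Ly_lsum.
  apply rsum_nonneg. intros p Hp. destruct (Hwf i) as [_ Hk]; [lia|].
  rewrite Ly_pmul_sos by auto. apply Hpsd; lia.
Qed.

End QuadraticModule.

Section LinComb.
Context {J : Type} (dir : J -> cpoly).

Definition lin_comb (l : list J) (al : J -> R) : cpoly :=
  fun a b => lsum l (fun i => Cmul (RtoC (al i)) (dir i a b)).

Lemma lin_comb_scal l c al a b :
  lin_comb l (fun i => c * al i) a b = Cmul (RtoC c) (lin_comb l al a b).
Proof. unfold lin_comb. rewrite <- lsum_mul_l. apply lsum_ext; intros. csplit; ring. Qed.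

Lemma lin_comb_add l al be a b :
  lin_comb l (fun i => al i + be i) a b = Cadd (lin_comb l al a b) (lin_comb l be a b).
Proof. unfold lin_comb. rewrite <- lsum_add. apply lsum_ext; intros. csplit; ring. Qed.

Lemma in_Rd_lin_comb n d l al :
  (forall i, In i l -> in_Rd n d (dir i)) -> in_Rd n d (lin_comb l al).
Proof.
  intros H. apply in_Rd_lsum. intros i Hi. apply (in_Rd_pscal n d (al i)). auto.
Qed.

End LinComb.

(* Real coordinates on R_d[zbar,z]: each ordered pair (a,b) carries the directions
   (e_ab + e_ba)/2 and i(e_ab - e_ba)/2, plus one extra direction [None] for a chosen c. *)
Definition dir_index := option (mi * mi * bool).

Definition dir_index_eq_dec (i j : dir_index) : {i = j} + {i <> j}.
Proof.
  decide equality. destruct a as [[a b] s], p as [[a' b'] s'].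
  decide equality; [apply Bool.bool_dec|]. decide equality; apply (list_eq_dec Nat.eq_dec).
Defined.

Definition indR (x a : mi) : R := if mi_eqb x a then 1 else 0.

Definition coord_dir (c : cpoly) (i : dir_index) : cpoly :=
  match i with
  | None => c
  | Some (a, b, true) => fun x y => RtoC ((indR x a * indR y b + indR x b * indR y a) / 2)
  | Some (a, b, false) => fun x y => mkC 0 ((indR x a * indR y b - indR x b * indR y a) / 2)
  end.

Definition coord_pairs (M : list mi) : list dir_index :=
  flat_map (fun a => flat_map (fun b => [Some (a, b, true); Some (a, b, false)]) M) M.

Definition coord_index (n d : nat) : list dir_index := coord_pairs (mis n d) ++ [None].

Definition coord (x : cpoly) (i : dir_index) : R :=
  match i with
  | None => 0
  | Some (a, b, true) => re (x a b)
  | Some (a, b, false) => im (x a b)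
  end.

(* the y with L_y(x) = sum_i coord x i * w i; the sign comes from re (x y) = re x re y - im x im y *)
Definition moment_of (n d : nat) (w : dir_index -> R) : cpoly := fun a b =>
  if andb (inb a (mis n d)) (inb b (mis n d))
  then mkC (w (Some (a, b, true))) (- w (Some (a, b, false))) else C0.

Lemma In_coord_pairs a b s M : In a M -> In b M -> In (Some (a, b, s)) (coord_pairs M).
Proof.
  intros Ha Hb. apply in_flat_map. exists a; split; auto.
  apply in_flat_map. exists b; split; auto. destruct s; simpl; auto.
Qed.

Lemma In_coord_pairs_inv i M :
  In i (coord_pairs M) -> exists a b s, i = Some (a, b, s) /\ In a M /\ In b M.
Proof.
  intros H. apply in_flat_map in H as [a [Ha H]]. apply in_flat_map in H as [b [Hb H]].
  destruct H as [<-|[<-|[]]]; eauto 7.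
Qed.

Lemma NoDup_coord_index n d : NoDup (coord_index n d).
Proof.
  apply NoDup_app.
  - apply NoDup_flat_map; [apply NoDup_mis| |].
    + intros a _. apply NoDup_flat_map; [apply NoDup_mis| |].
      * intros b _. repeat constructor; simpl; try tauto. intros [H|[]]; discriminate.
      * intros b b' z _ _ Hbb H1 H2.
        destruct H1 as [<-|[<-|[]]]; destruct H2 as [H2|[H2|[]]]; inversion H2; auto.
    + intros a a' z _ _ Haa H1 H2.
      apply in_flat_map in H1 as [b [_ H1]]. apply in_flat_map in H2 as [b' [_ H2]].
      destruct H1 as [<-|[<-|[]]]; destruct H2 as [H2|[H2|[]]]; inversion H2; auto.
  - repeat constructor; auto.
  - intros i Hi [<-|[]]. apply In_coord_pairs_inv in Hi as [a [b [s [H _]]]]. discriminate.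
Qed.

Lemma coord_dir_in_Rd n d c i : in_Rd n d c -> In i (coord_index n d) -> in_Rd n d (coord_dir c i).
Proof.
  intros Hc Hi. apply in_app_or in Hi as [Hi|[<-|[]]]; [|auto].
  apply In_coord_pairs_inv in Hi as [a [b [s [-> [Ha Hb]]]]].
  assert (Hz : forall x, ~ In x (mis n d) -> indR x a = 0 /\ indR x b = 0).
  { intros x Hx. unfold indR. rewrite !mi_eqb_false; auto; intro; subst; auto. }
  assert (Hout : forall x y, ~ (In x (mis n d) /\ In y (mis n d)) ->
            indR x a * indR y b = 0 /\ indR x b * indR y a = 0).
  { intros x y Hn. destruct (classic (In x (mis n d))) as [Hx|Hx].
    - destruct (Hz y) as [-> ->]; [tauto|]. split; ring.
    - destruct (Hz x Hx) as [-> ->]. split; ring. }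
  destruct s; split; cbn [coord_dir].
  - intros x y. csplit; field.
  - intros x y Hn. destruct (Hout x y Hn) as [-> ->]. csplit; field.
  - intros x y. csplit; field.
  - intros x y Hn. destruct (Hout x y Hn) as [-> ->]. csplit; field.
Qed.

Lemma lsum_herm_halves n d x p q : in_Rd n d x ->
  lsum (mis n d) (fun a => lsum (mis n d) (fun b =>
    Cadd (if andb (mi_eqb p a) (mi_eqb q b) then Cmul (RtoC (/2)) (x a b) else C0)
         (if andb (mi_eqb q a) (mi_eqb p b) then Cconj (Cmul (RtoC (/2)) (x a b)) else C0))) =
  x p q.
Proof.
  intros [Hh Hs].
  rewrite (lsum_ext _ _ (fun a => Cadd
     (lsum (mis n d) (fun b => if andb (mi_eqb p a) (mi_eqb q b) then Cmul (RtoC (/2)) (x a b) else C0))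
     (lsum (mis n d) (fun b =>
        if andb (mi_eqb q a) (mi_eqb p b) then Cconj (Cmul (RtoC (/2)) (x a b)) else C0))))
    by (intros; apply lsum_add).
  rewrite lsum_add, !lsum_diag by apply NoDup_mis.
  destruct (inb p (mis n d)) eqn:Ep, (inb q (mis n d)) eqn:Eq; cbn [andb].
  - rewrite <- (Hh p q). csplit; field.
  - rewrite Hs. csplit; ring. intros [_ Hq]. rewrite inb_true in Eq; auto. discriminate.
  - rewrite Hs. csplit; ring. intros [Hp _]. rewrite inb_true in Ep; auto. discriminate.
  - rewrite Hs. csplit; ring. intros [Hp _]. rewrite inb_true in Ep; auto. discriminate.
Qed.

Lemma lin_comb_coord n d c x p q : in_Rd n d x ->
  lin_comb (coord_dir c) (coord_index n d) (coord x) p q = x p q.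
Proof.
  intros Hx. rewrite <- (lsum_herm_halves n d x p q Hx).
  unfold lin_comb, coord_index. rewrite lsum_app, lsum_one.
  unfold coord_pairs. rewrite lsum_flat_map.
  transitivity (Cadd (lsum (mis n d) (fun a => lsum (mis n d) (fun b =>
    Cadd (if andb (mi_eqb p a) (mi_eqb q b) then Cmul (RtoC (/2)) (x a b) else C0)
         (if andb (mi_eqb q a) (mi_eqb p b) then Cconj (Cmul (RtoC (/2)) (x a b)) else C0)))) C0).
  - f_equal; [|cbn [coord]; csplit; ring].
    apply lsum_ext; intros a _. rewrite lsum_flat_map. apply lsum_ext; intros b _.
    cbn [lsum fold_right coord coord_dir]. unfold indR.
    destruct (mi_eqb p a), (mi_eqb q b), (mi_eqb p b), (mi_eqb q a); simpl; csplit; field.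
  - csplit; ring.
Qed.

Lemma Ly_moment_of n d x w :
  Ly n d x (moment_of n d w) = rsum (coord_index n d) (fun i => coord x i * w i).
Proof.
  unfold Ly, coord_index. rewrite re_lsum, rsum_app.
  change (rsum [None] ?F) with (F None + 0). cbv beta. cbn [coord].
  rewrite Rmult_0_l, !Rplus_0_r. unfold coord_pairs. rewrite rsum_flat_map.
  apply rsum_ext; intros a Ha. rewrite re_lsum, rsum_flat_map. apply rsum_ext; intros b Hb.
  simpl. unfold moment_of. rewrite !inb_true by auto. simpl. ring.
Qed.

(** * Order units and the M. Riesz extension *)

Section ConeSeparation.
Variables (n d : nat) (Q : cpoly -> Prop).
Hypothesis Q_ext : forall x y, (forall a b, x a b = y a b) -> Q x -> Q y.
Hypothesis Q_add : forall x y, Q x -> Q y -> Q (padd x y).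
Hypothesis Q_scal : forall s x, 0 <= s -> Q x -> Q (pscal s x).
Hypothesis Q_one : Q (one_poly n).

Definition dominated (x : cpoly) (t : R) : Prop :=
  Q (fun a b => Csub (Cmul (RtoC t) (one_poly n a b)) (x a b)).

Definition order_unit : Prop := forall x, in_Rd n d x -> exists t, dominated x t.

Lemma Q_zero : Q pzero.
Proof.
  apply (Q_ext (pscal 0 (one_poly n))); [|apply Q_scal; auto; lra].
  intros a b. unfold pscal, pzero. csplit; ring.
Qed.

Lemma dominated_ext x y t : (forall a b, x a b = y a b) -> dominated x t -> dominated y t.
Proof. intros H. apply Q_ext. intros a b. rewrite H; auto. Qed.

Lemma dominated_add x y t s : dominated x t -> dominated y s -> dominated (padd x y) (t + s).
Proof.
  intros H1 H2. eapply Q_ext; [|apply (Q_add _ _ H1 H2)].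
  intros a b. unfold padd. csplit; ring.
Qed.

Lemma dominated_scal x t s : 0 <= s -> dominated x t -> dominated (pscal s x) (s * t).
Proof.
  intros Hs H. eapply Q_ext; [|apply (Q_scal _ _ Hs H)].
  intros a b. unfold pscal. csplit; ring.
Qed.

Lemma dominated_sum {A : Type} (l : list A) (F : A -> cpoly) :
  (forall i, In i l -> exists t, dominated (F i) t) ->
  exists t, dominated (fun a b => lsum l (fun i => F i a b)) t.
Proof.
  induction l as [|i l IH]; intros H.
  - exists 0. eapply Q_ext; [|apply Q_zero]. intros a b. unfold pzero. simpl. csplit; ring.
  - destruct (H i) as [t Ht]; [simpl; auto|].
    destruct IH as [s Hs]; [intros; apply H; simpl; auto|].
    exists (t + s). eapply dominated_ext; [|apply (dominated_add _ _ _ _ Ht Hs)].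
    intros a b. reflexivity.
Qed.

Section OrderUnitFromMonomials.
Hypothesis Q_sos : forall p, hdeg_le n d p -> Q (sos_of [p]).
Hypothesis mono_dominated :
  forall a, In a (mis n d) -> exists t, dominated (sos_of [hmono a]) t.

Definition herm_pair (a b : mi) (u : C) : cpoly := fun x y =>
  Cadd (if andb (mi_eqb x a) (mi_eqb y b) then u else C0)
       (if andb (mi_eqb x b) (mi_eqb y a) then Cconj u else C0).

(* |z^a - u z^b|^2 >= 0 gives herm_pair a b u <= |z^a|^2 + |u|^2 |z^b|^2. *)
Lemma herm_pair_dominated a b u : In a (mis n d) -> In b (mis n d) ->
  exists t, dominated (herm_pair a b u) t.
Proof.
  intros Ha Hb. destruct (mono_dominated a Ha) as [ta Hta].
  destruct (mono_dominated b Hb) as [tb Htb].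
  set (s := re u * re u + im u * im u).
  assert (Hs : 0 <= s) by (unfold s; nra).
  set (p := fun x => Cadd (hmono a x) (Cmul (Copp u) (hmono b x))).
  assert (Hp : Q (sos_of [p])).
  { apply Q_sos. intros x Hx. unfold p, hmono.
    rewrite (mi_eqb_false x a), (mi_eqb_false x b) by (intro; subst; auto). csplit; ring. }
  exists (ta + s * tb).
  eapply Q_ext; [|apply (Q_add _ _ (dominated_add _ _ _ _ Hta (dominated_scal _ _ _ Hs Htb)) Hp)].
  intros x y. unfold padd, pscal, herm_pair. rewrite !sos_hmono. unfold sos_of. rewrite lsum_one.
  unfold p, hmono, s.
  destruct (mi_eqb x a), (mi_eqb y a), (mi_eqb x b), (mi_eqb y b); simpl; csplit; ring.
Qed.

Lemma order_unit_of_monomials : order_unit.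
Proof.
  intros x Hx.
  set (u := fun a b => Cmul (RtoC (/2)) (x a b)).
  destruct (dominated_sum (mis n d)
              (fun a p q => lsum (mis n d) (fun b => herm_pair a b (u a b) p q))) as [t Ht].
  { intros a Ha. apply dominated_sum. intros b Hb. apply herm_pair_dominated; auto. }
  exists t. eapply dominated_ext; [|exact Ht]. intros p q.
  rewrite <- (lsum_herm_halves n d x p q Hx). apply lsum_ext; intros a _. apply lsum_ext; intros b _.
  unfold herm_pair, u. rewrite (Bool.andb_comm (mi_eqb p b)). reflexivity.
Qed.

End OrderUnitFromMonomials.

Hypothesis HOU : order_unit.

Section Extension.
Context {J : Type} (J_eq_dec : forall i j : J, {i = j} + {i <> j}) (dir : J -> cpoly).

(* the functional taking the values w on the directions l is bounded above by the gauge of 1 *)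
Definition majorized (l : list J) (w : J -> R) : Prop :=
  forall al t, dominated (lin_comb dir l al) t -> rsum l (fun i => al i * w i) <= t.

Definition fupd (w : J -> R) (i0 : J) (v : R) : J -> R :=
  fun i => if J_eq_dec i i0 then v else w i.

Section Step.
Variables (l : list J) (w : J -> R) (i0 : J).
Hypothesis Hdir : forall i, In i (i0 :: l) -> in_Rd n d (dir i).
Hypothesis Hmaj : majorized l w.
Hypothesis Hfresh : ~ In i0 l.

(* lower and upper estimates for the value of the functional on dir i0 *)
Definition lower_est (r : R) : Prop := exists al t,
  dominated (fun a b => Csub (lin_comb dir l al a b) (dir i0 a b)) t /\ r = rsum l (fun i => al i * w i) - t.
Definition upper_est (r : R) : Prop := exists be s,
  dominated (fun a b => Cadd (lin_comb dir l be a b) (dir i0 a b)) s /\ r = s - rsum l (fun i => be i * w i).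

Lemma lower_le_upper r r' : lower_est r -> upper_est r' -> r <= r'.
Proof.
  intros [al [t [Ht ->]]] [be [s [Hs ->]]].
  assert (Hsum : dominated (lin_comb dir l (fun i => al i + be i)) (t + s)).
  { eapply dominated_ext; [|exact (dominated_add _ _ _ _ Ht Hs)].
    intros a b. unfold padd. rewrite lin_comb_add. csplit; ring. }
  apply Hmaj in Hsum.
  rewrite (rsum_ext _ _ (fun i => al i * w i + be i * w i)), rsum_add in Hsum by (intros; ring).
  lra.
Qed.

Lemma lower_est_exists : exists r, lower_est r.
Proof.
  destruct (HOU (padd (lin_comb dir l (fun _ => 0)) (pscal (-1) (dir i0)))) as [t Ht].
  { apply in_Rd_padd; [apply in_Rd_lin_comb|apply in_Rd_pscal]; intros; apply Hdir; simpl; auto. }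
  exists (rsum l (fun i => 0 * w i) - t), (fun _ => 0), t. split; auto.
  eapply dominated_ext; [|exact Ht]. intros a b. unfold padd, pscal. csplit; ring.
Qed.

Lemma upper_est_exists : exists r, upper_est r.
Proof.
  destruct (HOU (padd (lin_comb dir l (fun _ => 0)) (dir i0))) as [s Hs].
  { apply in_Rd_padd; [apply in_Rd_lin_comb|]; intros; apply Hdir; simpl; auto. }
  exists (s - rsum l (fun i => 0 * w i)), (fun _ => 0), s. auto.
Qed.

Lemma majorized_fupd v : (forall r, lower_est r -> r <= v) -> (forall r, upper_est r -> v <= r) ->
  majorized (i0 :: l) (fupd w i0 v).
Proof.
  intros Hlow Hup be t Ht. change (rsum (i0 :: l) ?F) with (F i0 + rsum l F). cbv beta.
  unfold fupd at 1.
  destruct (J_eq_dec i0 i0) as [_|]; [|congruence].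
  rewrite (rsum_ext l (fun i => be i * fupd w i0 v i) (fun i => be i * w i)).
  2:{ intros i Hi. unfold fupd. destruct (J_eq_dec i i0); auto. subst; contradiction. }
  assert (Hsplit : forall a b, lin_comb dir (i0 :: l) be a b =
            Cadd (Cmul (RtoC (be i0)) (dir i0 a b)) (lin_comb dir l be a b)) by reflexivity.
  destruct (Rtotal_order (be i0) 0) as [Hneg|[Hz|Hpos]].
  - set (c := / (- be i0)).
    assert (Hc : 0 < c) by (apply Rinv_0_lt_compat; lra).
    assert (Hl : c * rsum l (fun i => be i * w i) - c * t <= v).
    { apply Hlow. exists (fun i => c * be i), (c * t). split.
      - eapply dominated_ext; [|exact (dominated_scal _ _ _ (Rlt_le _ _ Hc) Ht)].
        intros a b. unfold pscal. rewrite Hsplit, lin_comb_scal. unfold c. csplit; field; lra.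
      - rewrite <- rsum_mul_l. f_equal. apply rsum_ext; intros; ring. }
    apply (Rmult_le_compat_l (- be i0)) in Hl; [|lra].
    replace (- be i0 * (c * rsum l (fun i => be i * w i) - c * t)) with
      (rsum l (fun i => be i * w i) - t) in Hl by (unfold c; field; lra). lra.
  - rewrite Hz. assert (H0 : dominated (lin_comb dir l be) t).
    { eapply dominated_ext; [|exact Ht]. intros a b. rewrite Hsplit, Hz. csplit; ring. }
    apply Hmaj in H0. lra.
  - set (c := / be i0).
    assert (Hc : 0 < c) by (apply Rinv_0_lt_compat; lra).
    assert (Hu : v <= c * t - c * rsum l (fun i => be i * w i)).
    { apply Hup. exists (fun i => c * be i), (c * t). split.
      - eapply dominated_ext; [|exact (dominated_scal _ _ _ (Rlt_le _ _ Hc) Ht)].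
        intros a b. unfold pscal. rewrite Hsplit, lin_comb_scal. unfold c. csplit; field; lra.
      - rewrite <- rsum_mul_l. f_equal. apply rsum_ext; intros; ring. }
    apply (Rmult_le_compat_l (be i0)) in Hu; [|lra].
    replace (be i0 * (c * t - c * rsum l (fun i => be i * w i))) with
      (t - rsum l (fun i => be i * w i)) in Hu by (unfold c; field; lra). lra.
Qed.

(* one step of the Hahn-Banach (M. Riesz) extension, with v the supremum of the lower estimates *)
Lemma majorized_extend : exists v, majorized (i0 :: l) (fupd w i0 v) /\
  forall M, (forall r, lower_est r -> r <= M) -> v <= M.
Proof.
  destruct upper_est_exists as [r0 Hr0].
  destruct (completeness lower_est) as [v [Hv1 Hv2]].
  - exists r0. intros r Hr. apply (lower_le_upper r r0); auto.
  - apply lower_est_exists.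
  - exists v. split; [|exact Hv2]. apply majorized_fupd; [exact Hv1|].
    intros r Hr. apply Hv2. intros r' Hr'. apply (lower_le_upper r' r); auto.
Qed.

End Step.

Lemma majorized_extend_list l0 w : majorized l0 w -> forall l1, NoDup (l1 ++ l0) ->
  (forall i, In i (l1 ++ l0) -> in_Rd n d (dir i)) ->
  exists w', majorized (l1 ++ l0) w' /\ forall i, In i l0 -> w' i = w i.
Proof.
  intros Hmaj l1. induction l1 as [|i0 l1 IH]; simpl; intros Hnd Hdir.
  - exists w; split; auto.
  - inversion Hnd as [|? ? Hni Hnd']; subst.
    destruct IH as [w1 [Hw1 Hw2]]; auto.
    destruct (majorized_extend (l1 ++ l0) w1 i0) as [v [Hv _]]; auto.
    exists (fupd w1 i0 v). split; auto. intros i Hi. unfold fupd.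
    destruct (J_eq_dec i i0); subst; auto. exfalso; apply Hni, in_or_app; auto.
Qed.

Lemma majorized_le l w al be : majorized l w ->
  (forall p q, lin_comb dir l al p q = lin_comb dir l be p q) ->
  rsum l (fun i => al i * w i) <= rsum l (fun i => be i * w i).
Proof.
  intros Hmaj H.
  assert (H0 : dominated (lin_comb dir l (fun i => al i + (-1) * be i)) 0).
  { eapply Q_ext; [|apply Q_zero]. intros a b. unfold pzero.
    rewrite lin_comb_add, lin_comb_scal, H. csplit; ring. }
  apply Hmaj in H0.
  rewrite (rsum_ext _ _ (fun i => al i * w i + (-1) * (be i * w i))), rsum_add, rsum_mul_l in H0
    by (intros; ring).
  lra.
Qed.

Lemma majorized_eq l w al be : majorized l w ->
  (forall p q, lin_comb dir l al p q = lin_comb dir l be p q) ->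
  rsum l (fun i => al i * w i) = rsum l (fun i => be i * w i).
Proof. intros H1 H2. apply Rle_antisym; apply majorized_le; auto. Qed.

Definition unit_vec (i : J) : J -> R := fun j => if J_eq_dec j i then 1 else 0.

Lemma lin_comb_unit_vec l i p q : NoDup l -> In i l -> lin_comb dir l (unit_vec i) p q = dir i p q.
Proof.
  intros Hnd Hi. unfold lin_comb. rewrite (lsum_single _ _ i); auto.
  - unfold unit_vec. destruct (J_eq_dec i i); [|congruence]. csplit; ring.
  - intros j _ Hj. unfold unit_vec. destruct (J_eq_dec j i); [congruence|]. csplit; ring.
Qed.

Lemma rsum_unit_vec l i (w : J -> R) : NoDup l -> In i l -> rsum l (fun j => unit_vec i j * w j) = w i.
Proof.
  intros Hnd Hi. rewrite (rsum_single _ _ i); auto.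
  - unfold unit_vec. destruct (J_eq_dec i i); [|congruence]. ring.
  - intros j _ Hj. unfold unit_vec. destruct (J_eq_dec j i); [congruence|]. ring.
Qed.

End Extension.

Hypothesis Q_in_Rd : forall x, Q x -> in_Rd n d x.

Lemma Q_full_of_neg_one : Q (pscal (-1) (one_poly n)) -> forall x, in_Rd n d x -> Q x.
Proof.
  intros Hm1 x Hx. destruct (HOU (pscal (-1) x)) as [t Ht]; [apply in_Rd_pscal; auto|].
  destruct (Rle_or_lt t 0) as [Ht0|Ht0].
  - eapply Q_ext; [|exact (Q_add _ _ Ht (Q_scal (- t) _ ltac:(lra) Q_one))].
    intros a b. unfold padd, pscal. csplit; ring.
  - eapply Q_ext; [|exact (Q_add _ _ Ht (Q_scal t _ ltac:(lra) Hm1))].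
    intros a b. unfold padd, pscal. csplit; ring.
Qed.

Section MomentOfFunctional.
Variables (c : cpoly) (w : dir_index -> R).
Hypothesis Hc : in_Rd n d c.
Hypothesis Hmaj : majorized (coord_dir c) (coord_index n d) w.

Let y := moment_of n d w.

Lemma moment_of_Ly_le x t : in_Rd n d x -> dominated x t -> Ly n d x y <= t.
Proof.
  intros Hx Ht. unfold y. rewrite Ly_moment_of. apply Hmaj.
  eapply dominated_ext; [|exact Ht]. intros a b. symmetry. apply lin_comb_coord; auto.
Qed.

Lemma moment_of_nonneg q : Q q -> 0 <= Ly n d q y.
Proof.
  intros Hq. assert (Hle : Ly n d (pscal (-1) q) y <= 0).
  { apply moment_of_Ly_le; [apply in_Rd_pscal; auto|].
    eapply Q_ext; [|exact Hq]. intros a b. unfold pscal. csplit; ring. }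
  rewrite Ly_pscal in Hle. lra.
Qed.

Lemma moment_of_one : Ly n d (one_poly n) y = 1.
Proof.
  assert (Hle : Ly n d (one_poly n) y <= 1).
  { apply moment_of_Ly_le; [apply one_in_Rd|].
    eapply Q_ext; [|exact Q_zero]. intros a b. unfold pzero. csplit; ring. }
  assert (Hge : Ly n d (pscal (-1) (one_poly n)) y <= -1).
  { apply moment_of_Ly_le; [apply in_Rd_pscal, one_in_Rd|].
    eapply Q_ext; [|exact Q_zero]. intros a b. unfold pscal, pzero. csplit; ring. }
  rewrite Ly_pscal in Hge. lra.
Qed.

Lemma moment_of_c : Ly n d c y <= w None.
Proof.
  pose proof (NoDup_coord_index n d) as Hnd.
  assert (HN : In None (coord_index n d)) by (apply in_or_app; simpl; auto).
  unfold y. rewrite Ly_moment_of, <- (rsum_unit_vec dir_index_eq_dec (coord_index n d) None w) by auto.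
  apply (majorized_le (coord_dir c)); auto.
  intros p q. rewrite lin_comb_coord, lin_comb_unit_vec; auto.
Qed.

Lemma moment_of_in_Rd : in_Rd n d y.
Proof.
  pose proof (NoDup_coord_index n d) as Hnd.
  assert (Hi : forall a b s, In a (mis n d) -> In b (mis n d) ->
                 In (Some (a, b, s)) (coord_index n d)).
  { intros. apply in_or_app; left. apply In_coord_pairs; auto. }
  split; intros a b; unfold y, moment_of.
  - destruct (inb a (mis n d)) eqn:Ea, (inb b (mis n d)) eqn:Eb; simpl; try (csplit; ring).
    apply inb_In in Ea, Eb.
    (* the directions of (a,b) and (b,a) agree up to sign, hence so do their values *)
    assert (E1 : w (Some (b, a, true)) = w (Some (a, b, true))).
    { rewrite <- (rsum_unit_vec dir_index_eq_dec (coord_index n d) (Some (b, a, true)) w),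
        <- (rsum_unit_vec dir_index_eq_dec (coord_index n d) (Some (a, b, true)) w) by auto.
      apply (majorized_eq (coord_dir c)); auto.
      intros p q. rewrite !lin_comb_unit_vec by auto. cbn [coord_dir]. csplit; field. }
    assert (E2 : w (Some (b, a, false)) = - w (Some (a, b, false))).
    { rewrite <- (rsum_unit_vec dir_index_eq_dec (coord_index n d) (Some (b, a, false)) w) by auto.
      rewrite (majorized_eq (coord_dir c) _ w _
                 (fun j => (-1) * unit_vec dir_index_eq_dec (Some (a, b, false)) j)); auto.
      - rewrite (rsum_ext _ _ (fun j => (-1) * (unit_vec dir_index_eq_dec (Some (a, b, false)) j * w j)))
          by (intros; ring).
        rewrite rsum_mul_l, rsum_unit_vec by auto. ring.
      - intros p q. rewrite lin_comb_scal, !lin_comb_unit_vec by auto. cbn [coord_dir]. csplit; field. }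
    csplit; rewrite ?E1, ?E2; ring.
  - intros Hn. destruct (inb a (mis n d)) eqn:Ea, (inb b (mis n d)) eqn:Eb; simpl; auto.
    apply inb_In in Ea, Eb. tauto.
Qed.

End MomentOfFunctional.

Theorem cone_separation c : in_Rd n d c -> ~ Q c ->
  exists y, in_Rd n d y /\ Ly n d (one_poly n) y = 1 /\
    (forall q, Q q -> 0 <= Ly n d q y) /\ Ly n d c y <= 0.
Proof.
  intros Hc HnQ.
  assert (Hneg_one : ~ Q (pscal (-1) (one_poly n))) by (intros H; apply HnQ, Q_full_of_neg_one; auto).
  assert (Hnil : majorized (coord_dir c) [] (fun _ => 0)).
  { intros al t Ht. simpl. apply Rnot_lt_le. intros Hlt. apply Hneg_one.
    eapply Q_ext; [|exact (Q_scal (/ - t) _ ltac:(left; apply Rinv_0_lt_compat; lra) Ht)].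
    intros a b. unfold pscal. simpl. csplit; field; lra. }
  destruct (majorized_extend dir_index_eq_dec (coord_dir c) [] (fun _ => 0) None) as [v [Hv Hv0]];
    auto.
  { intros i [<-|[]]. auto. }
  assert (Hvle : v <= 0).
  { apply Hv0. intros r [al [t [Ht ->]]]. simpl. apply Rnot_lt_le. intro Hlt. apply HnQ.
    eapply Q_ext; [|exact (Q_add _ _ Ht (Q_scal (- t) _ ltac:(lra) Q_one))].
    intros a b. unfold padd, pscal, lin_comb. simpl. csplit; ring. }
  destruct (majorized_extend_list dir_index_eq_dec (coord_dir c) [None] _ Hv (coord_pairs (mis n d)))
    as [w [Hw HwN]].
  { apply NoDup_coord_index. }
  { intros i Hi. apply coord_dir_in_Rd; auto. }
  exists (moment_of n d w). split; [|split; [|split]].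
  - apply moment_of_in_Rd with (c := c); auto.
  - apply moment_of_one with (c := c); auto.
  - intros q Hq. apply moment_of_nonneg with (c := c); auto.
  - pose proof (moment_of_c c w Hc Hw) as H. rewrite HwN in H by (simpl; auto).
    unfold fupd in H. destruct (dir_index_eq_dec None None); [lra|congruence].
Qed.

End ConeSeparation.

(** * The sphere constraint gives an order unit *)

Lemma pmul_hmono_sphere n da Rr c x y : In c (mis n da) ->
  pmul n (sos_of [hmono c]) da (sphere_poly n Rr) 1 x y =
  lsum (mis n 1) (fun e => if andb (mi_eqb (madd c e) x) (mi_eqb (madd c e) y)
                           then sphere_poly n Rr e e else C0).
Proof.
  intros Hc. rewrite pmul_hmono_l; auto. apply lsum_ext; intros e He.
  rewrite (lsum_single _ _ e); auto; [apply NoDup_mis|].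
  intros t _ Ht. destruct (andb _ _); auto. unfold sphere_poly. rewrite mi_eqb_false; auto.
Qed.

Lemma sphere_shift_identity n da Rr a' e x y :
  In a' (mis n da) -> length e = n -> deg e = 1%nat ->
  Cadd (pmul n (sos_of [hmono a']) da (sphere_poly n Rr) 1 x y)
       (lsum (mis n 1) (fun v => if orb (mi_eqb v (repeat 0%nat n)) (mi_eqb v e) then C0
                                 else sos_of [hmono (madd a' v)] x y)) =
  Cadd (Cmul (RtoC (Rr * Rr)) (sos_of [hmono a'] x y)) (Copp (sos_of [hmono (madd a' e)] x y)).
Proof.
  intros Ha' Hle Hde. set (z := repeat 0%nat n).
  assert (Hl' : length a' = n) by (apply mis_char in Ha'; tauto).
  assert (Hz : In z (mis n 1)) by apply repeat0_mis.
  assert (He : In e (mis n 1)) by (apply mis_char; split; lia).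
  assert (Hze : z <> e).
  { intro Hze. rewrite <- Hze in Hde. unfold z in Hde. rewrite deg_repeat0 in Hde. lia. }
  rewrite pmul_hmono_sphere, <- lsum_add by auto.
  rewrite (lsum_two _ _ z e); auto; [| apply NoDup_mis |].
  - rewrite !sos_hmono.
    assert (Ez : madd a' z = a') by (unfold z; rewrite <- Hl'; apply madd_repeat0).
    rewrite Ez, !mi_eqb_refl, (mi_eqb_false e z) by auto. simpl.
    unfold sphere_poly. rewrite !mi_eqb_refl, (mi_eqb_false e (repeat 0%nat n)) by auto.
    rewrite Hle, Hde, !Nat.eqb_refl. simpl.
    rewrite (mi_eqb_sym a' x), (mi_eqb_sym a' y), (mi_eqb_sym (madd a' e) x), (mi_eqb_sym (madd a' e) y).
    destruct (mi_eqb x a'), (mi_eqb y a'), (mi_eqb x (madd a' e)), (mi_eqb y (madd a' e));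
      simpl; csplit; ring.
  - intros v Hv Hvz Hve. rewrite sos_hmono. apply mis_char in Hv as [Hv1 Hv2].
    assert (Hv3 : deg v = 1%nat).
    { destruct (deg v) eqn:E; [|lia]. apply deg0_repeat in E. rewrite Hv1 in E. contradiction. }
    rewrite (mi_eqb_false v z), (mi_eqb_false v e) by auto. simpl.
    unfold sphere_poly. rewrite mi_eqb_refl, (mi_eqb_false v (repeat 0%nat n)) by auto.
    rewrite Hv1, Hv3, Nat.eqb_refl. simpl. rewrite (mi_eqb_sym x), (mi_eqb_sym y).
    destruct (andb _ _); csplit; ring.
Qed.

Section SphereOrderUnit.
Variables (n m d : nat) (g : nat -> cpoly) (kg : nat -> nat) (i : nat) (Rr : R).
Hypothesis Hi : (1 <= i <= m)%nat.
Hypothesis Hgi : g i = sphere_poly n Rr.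
Hypothesis Hki : kg i = 1%nat.

Let Q := qmodule n m d g kg.

(* |z^a|^2 <= R^(2|a|), by induction on |a| using the identity above *)
Lemma sphere_mono_dominated a : In a (mis n d) -> exists t, dominated n Q (sos_of [hmono a]) t.
Proof.
  remember (deg a) as N eqn:HN. revert a HN. induction N as [|N IH]; intros a HN Ha.
  - exists 1. apply (qmodule_ext n m d g kg pzero); [|apply qmodule_zero].
    apply mis_char in Ha as [Hl _]. symmetry in HN. apply deg0_repeat in HN.
    rewrite Hl in HN. subst a.
    intros x y. rewrite sos_hmono. unfold one_poly, pzero. destruct (andb _ _); csplit; ring.
  - destruct (madd_unit_split a) as [a' [e [He1 [He2 [He3 [He4 He5]]]]]]; [lia|].
    apply mis_char in Ha as [Hl Hd].
    assert (Ha' : In a' (mis n (d - 1))) by (apply mis_char; split; lia).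
    destruct (IH a') as [t' Ht']; [lia|apply (mis_mono n (d - 1)); auto; lia|].
    assert (Hki' : kfull kg i = 1%nat) by (destruct i; [lia|]; simpl; auto).
    assert (Hgi' : gfull n g i = sphere_poly n Rr) by (destruct i; [lia|]; simpl; auto).
    exists (Rr * Rr * t').
    set (X1 := pscal (Rr * Rr)
                 (fun a b => Csub (Cmul (RtoC t') (one_poly n a b)) (sos_of [hmono a'] a b))).
    set (X2 := pmul n (sos_of [hmono a']) (d - 1) (sphere_poly n Rr) 1).
    set (X3 := fun x y => lsum (mis n 1) (fun v =>
                 if orb (mi_eqb v (repeat 0%nat n)) (mi_eqb v e) then C0
                 else sos_of [hmono (madd a' v)] x y)).
    apply (qmodule_ext n m d g kg (padd (padd X1 X2) X3)).
    { intros x y. unfold padd.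
      transitivity (Cadd (X1 x y) (Cadd (X2 x y) (X3 x y))); [csplit; ring|].
      unfold X2, X3. rewrite sphere_shift_identity by (auto; lia). rewrite <- He1.
      unfold X1, pscal. csplit; ring. }
    apply qmodule_add; [apply qmodule_add|].
    + apply qmodule_scal; auto. apply Rle_0_sqr.
    + pose proof (qmodule_gen n m d g kg i (hmono a')) as HQ. rewrite Hki', Hgi' in HQ.
      apply HQ; [lia|]. intros b Hb. unfold hmono. rewrite mi_eqb_false; auto.
      intro; subst; auto.
    + apply qmodule_sum. intros v Hv. destruct (orb _ _); [apply qmodule_zero|].
      apply qmodule_sos. intros p [<-|[]] b Hb. unfold hmono. rewrite mi_eqb_false; auto.
      intro; subst b. apply Hb. replace d with (d - 1 + 1)%nat by lia. apply madd_mis; auto.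
Qed.

Lemma sphere_order_unit : order_unit n d Q.
Proof.
  apply order_unit_of_monomials.
  - apply qmodule_ext.
  - apply qmodule_add.
  - apply qmodule_scal.
  - apply qmodule_one.
  - intros p Hp. apply qmodule_sos. intros q [<-|[]]. auto.
  - apply sphere_mono_dominated.
Qed.

End SphereOrderUnit.

(** * Duality *)

Section Duality.
Variables (n m d : nat) (f : cpoly) (g : nat -> cpoly) (kg : nat -> nat).
Hypothesis Hwf : wf_constraints n m d g kg.
Hypothesis Hf : in_Rd n d f.

Let Q := qmodule n m d g kg.

Lemma Ly_sub_one y lam :
  Ly n d (fun a b => Csub (f a b) (Cmul (RtoC lam) (one_poly n a b))) y =
  Ly n d f y - lam * re (y (repeat 0%nat n) (repeat 0%nat n)).
Proof.
  rewrite (Ly_ext _ _ _ (fun a b => Cadd (f a b) (Cmul (RtoC (- lam)) (one_poly n a b)))).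
  - rewrite Ly_lin, Ly_one. ring.
  - intros a b. csplit; ring.
Qed.

Lemma sos_le_moment x lam :
  moment_values n m d f g kg x -> sos_values n m d f g kg lam -> lam <= x.
Proof.
  intros [y [_ [Hy0 [Hpsd ->]]]] Hlam.
  pose proof (qmodule_Ly_nonneg n m d g kg Hwf y _ Hpsd Hlam) as H.
  rewrite Ly_sub_one, Hy0 in H. simpl in H. lra.
Qed.

Lemma moment_feasible_of_nonneg y : in_Rd n d y -> Ly n d (one_poly n) y = 1 ->
  (forall q, Q q -> 0 <= Ly n d q y) ->
  y (repeat 0%nat n) (repeat 0%nat n) = C1 /\
  forall i, (i <= m)%nat ->
    psd n (d - kfull kg i) (locmat n (d - kfull kg i) (kfull kg i) (gfull n g i) y).
Proof.
  intros [Hyh Hys] Hone Hpos. split.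
  - rewrite Ly_one in Hone. pose proof (Hyh (repeat 0%nat n) (repeat 0%nat n)) as Hh.
    destruct (y (repeat 0%nat n) (repeat 0%nat n)) as [r s]. simpl in Hone.
    unfold Cconj in Hh; simpl in Hh. injection Hh; intros. apply C_ext; simpl; lra.
  - intros i Hi. destruct (Hwf i Hi) as [Hgh Hk]. split.
    + intros a b _ _. apply locmat_herm; auto.
    + intros v. set (e := (d - kfull kg i)%nat).
      set (v' := fun a => if inb a (mis n e) then v a else C0).
      change (0 <= re (qform n e (locmat n e (kfull kg i) (gfull n g i) y) v)).
      replace (qform n e _ v) with (qform n e (locmat n e (kfull kg i) (gfull n g i) y) v').
      * unfold e. rewrite <- Ly_pmul_sos by auto. apply Hpos, qmodule_gen; auto.
        intros a Ha. unfold v'. rewrite inb_false; auto.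
      * unfold qform. apply lsum_ext; intros a Ha. apply lsum_ext; intros b Hb.
        unfold v'. rewrite !inb_true; auto.
Qed.

Hypothesis HOU : order_unit n d Q.

Lemma sos_values_nonempty : exists lam, sos_values n m d f g kg lam.
Proof.
  destruct (HOU (pscal (-1) f)) as [t Ht]; [apply in_Rd_pscal; auto|].
  exists (- t). eapply qmodule_ext; [|exact Ht]. intros a b. unfold pscal. csplit; ring.
Qed.

Lemma sos_value_of_moment_gap lam :
  (forall x, moment_values n m d f g kg x -> lam < x) -> sos_values n m d f g kg lam.
Proof.
  intros Hgap. set (c := fun a b => Csub (f a b) (Cmul (RtoC lam) (one_poly n a b))).
  apply NNPP. intros HnQ. change (~ Q c) in HnQ.
  assert (Hc : in_Rd n d c).
  { apply (in_Rd_ext n d (padd f (pscal (- lam) (one_poly n)))).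
    - intros a b. unfold padd, pscal, c. csplit; ring.
    - apply in_Rd_padd, in_Rd_pscal, one_in_Rd; auto. }
  destruct (cone_separation n d Q (qmodule_ext n m d g kg) (qmodule_add n m d g kg)
              (qmodule_scal n m d g kg) (qmodule_one n m d g kg) HOU
              (qmodule_in_Rd n m d g kg Hwf) c Hc HnQ) as [y [Hy [Hone [Hpos Hcy]]]].
  destruct (moment_feasible_of_nonneg y Hy Hone Hpos) as [Hy0 Hpsd].
  assert (Hlt : lam < Ly n d f y) by (apply Hgap; exists y; auto).
  unfold c in Hcy. rewrite Ly_sub_one, Hy0 in Hcy. simpl in Hcy. lra.
Qed.

End Duality.

Lemma glb_exists (S : R -> Prop) : (exists x, S x) -> (exists b, forall x, S x -> b <= x) ->
  exists r, (forall x, S x -> r <= x) /\ (forall r', (forall x, S x -> r' <= x) -> r' <= r).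
Proof.
  intros [x0 Hx0] [b Hb].
  destruct (completeness (fun r => S (- r))) as [s [Hs1 Hs2]].
  - exists (- b). intros r Hr. apply Hb in Hr. lra.
  - exists (- x0). rewrite Ropp_involutive. auto.
  - exists (- s). split.
    + intros x Hx. enough (- x <= s) by lra. apply Hs1. rewrite Ropp_involutive. auto.
    + intros r' Hr'. enough (s <= - r') by lra. apply Hs2. intros r Hr. apply Hr' in Hr. lra.
Qed.

Lemma ext_inf_sup_agree (S T : R -> Prop) :
  (forall x lam, S x -> T lam -> lam <= x) -> (exists lam, T lam) ->
  (forall lam, (forall x, S x -> lam < x) -> T lam) ->
  exists e, e <> MInf /\ is_ext_inf S e /\ is_ext_sup T e.
Proof.
  intros Hweak [lam0 Hlam0] Hgap.
  destruct (classic (exists x, S x)) as [HS|HS].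
  - destruct (glb_exists S HS) as [r [Hr1 Hr2]]; [exists lam0; intros; apply Hweak; auto|].
    exists (Fin r). split; [discriminate|]. split; [split; auto|split].
    + intros lam Hlam. apply Hr2. intros x Hx. apply Hweak; auto.
    + intros r' Hr'. apply Rnot_lt_le. intros Hlt.
      assert (Hmid : T ((r' + r) / 2)) by (apply Hgap; intros x Hx; apply Hr1 in Hx; lra).
      apply Hr' in Hmid. lra.
  - exists PInf. split; [discriminate|split].
    + intros x Hx. apply HS; eauto.
    + intros M. exists (M + 1). split; [|lra]. apply Hgap. intros x Hx. exfalso; apply HS; eauto.
Qed.

Lemma sphere_poly_degree n K Rr : (1 <= n)%nat -> has_deg n K (sphere_poly n Rr) -> K = 1%nat.
Proof.
  intros Hn [[_ Hs] [a [b [Ha [Hb [Hda Hne]]]]]].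
  assert (HK : K = 0%nat \/ K = 1%nat).
  { unfold sphere_poly in Hne. destruct (mi_eqb a b); [|contradiction].
    destruct (mi_eqb a (repeat 0%nat n)) eqn:E1.
    - apply mi_eqb_true in E1. rewrite E1, deg_repeat0 in Hda. auto.
    - destruct (Nat.eqb (length a) n && Nat.eqb (deg a) 1)%bool eqn:E2; [|contradiction].
      apply Bool.andb_true_iff in E2 as [_ E2]. apply Nat.eqb_eq in E2. lia. }
  destruct HK as [->| ->]; auto. exfalso.
  (* with K = 0 the coefficient of |z_1|^2, which is -1, would have to vanish *)
  set (u := 1%nat :: repeat 0%nat (n - 1)).
  assert (Hu1 : length u = n) by (unfold u; simpl; rewrite repeat_length; lia).
  assert (Hu2 : deg u = 1%nat) by (unfold u; rewrite deg_cons, deg_repeat0; auto).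
  assert (Hsu : sphere_poly n Rr u u = C0).
  { apply Hs. intros [H _]. apply mis_char in H. lia. }
  unfold sphere_poly in Hsu. rewrite mi_eqb_refl, mi_eqb_false in Hsu.
  - rewrite Hu1, Hu2, !Nat.eqb_refl in Hsu. simpl in Hsu. injection Hsu. lra.
  - intros E. rewrite E, deg_repeat0 in Hu2. lia.
Qed.

Lemma dmin_ge_k m k kg : (k <= dmin m k kg)%nat.
Proof. unfold dmin. induction (map kg (seq 1 m)); simpl; lia. Qed.

Lemma dmin_ge_kg m k kg i : (1 <= i <= m)%nat -> (kg i <= dmin m k kg)%nat.
Proof.
  intros Hi. unfold dmin. assert (H : In (kg i) (map kg (seq 1 m))) by (apply in_map, in_seq; lia).
  induction (map kg (seq 1 m)); simpl in *; [contradiction|].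
  destruct H as [<-|H]; [lia|]. apply IHl in H. lia.
Qed.

Lemma in_Rd_mono n k d x : (k <= d)%nat -> in_Rd n k x -> in_Rd n d x.
Proof.
  intros Hkd [Hh Hs]. split; auto. intros a b Hn. apply Hs. intros [Ha Hb].
  apply Hn. split; apply (mis_mono n k); auto.
Qed.

Theorem mainTheorem10 (n m k : nat) (f : cpoly) (g : nat -> cpoly) (kg : nat -> nat)
  (hn : (1 <= n)%nat) (hm : (1 <= m)%nat)
  (hf : has_deg n k f)
  (hg : forall i, (1 <= i <= m)%nat -> has_deg n (kg i) (g i))
  (hsphere : exists i i' (Rr : R), (1 <= i <= m)%nat /\ (1 <= i' <= m)%nat /\ 0 < Rr /\
       g i = sphere_poly n Rr /\ g i' = popp (sphere_poly n Rr)) :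
  forall d : nat, (dmin m k kg <= d)%nat ->
    exists e : ER, e <> MInf /\
      is_ext_inf (moment_values n m d f g kg) e /\
      is_ext_sup (sos_values n m d f g kg) e.
Proof.
  intros d Hd.
  destruct hsphere as [i [_ [Rr [Hi [_ [_ [Hgi _]]]]]]].
  assert (Hki : kg i = 1%nat).
  { apply (sphere_poly_degree n (kg i) Rr hn). rewrite <- Hgi. auto. }
  assert (Hwf : wf_constraints n m d g kg).
  { intros [|j] Hj; cbn [gfull kfull].
    - split; [exact (proj1 (one_in_Rd n 0))|lia].
    - destruct (hg (S j)) as [[Hh _] _]; [lia|].
      pose proof (dmin_ge_kg m k kg (S j)). split; [exact Hh|lia]. }
  assert (Hf : in_Rd n d f).
  { apply (in_Rd_mono n k); [pose proof (dmin_ge_k m k kg); lia|apply hf]. }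
  pose proof (sphere_order_unit n m d g kg i Rr Hi Hgi Hki) as HOU.
  apply ext_inf_sup_agree.
  - apply sos_le_moment; auto.
  - apply sos_values_nonempty; auto.
  - apply sos_value_of_moment_gap; auto.
Qed.
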